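(* If $C \subseteq \mathbb{Z}$ is a nonempty finite set, then there exists a set $W \subseteq \mathbb{Z}$ such that $C$ is a minimal additive complement to $W$.
   Context: For $X, Y \subseteq \mathbb{Z}$, $X + Y = \{x + y : x \in X, y \in Y\}$. A set $C \subseteq \mathbb{Z}$ is an additive complement to $W \subseteq \mathbb{Z}$ if $C + W = \mathbb{Z}$; it is a minimal additive complement to $W$ if moreover no proper subset of $C$ is an additive complement to $W$. *)

From Stdlib Require Import ZArith List.
Open Scope Z_scope.

Definition sumset (X Y : Z -> Prop) : Z -> Prop :=
  fun z => exists x y, X x /\ Y y /\ z = x + y.

Definition additive_complement (C W : Z -> Prop) : Prop :=
  forall z : Z, sumset C W z.

Definition proper_subset (C' C : Z -> Prop) : Prop :=
  (forall x, C' x -> C x) /\ (exists x, C x /\ ~ C' x).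

Definition minimal_additive_complement (C W : Z -> Prop) : Prop :=
  additive_complement C W /\
  forall C' : Z -> Prop, proper_subset C' C -> ~ additive_complement C' W.

Definition finite_set (C : Z -> Prop) : Prop :=
  exists l : list Z, forall x, C x <-> In x l.

From Stdlib Require Import ZArith List Lia Classical.
Open Scope Z_scope.

(* Let [d = max C - min C] and [M = 2d + 1], and take for [W] the complement of
   [S = {a M - b : a, b in C, a <> b}].  Minimality: [c M] has the
   decomposition [c + (c M - c)], while [c M - c'] lies in [S] for every other
   [c'] in [C], so no proper subset of [C] reaches [c M].  Covering: every
   integer is uniquely [q M + e] with [|e| <= d].  If [z - c] lay in [S] for
   every [c] in [C], say [z - c = a M - b], then [a = q] and [e = c - b]; taking
   [c = min C] gives [e <= 0], taking [c = max C] gives [e >= 0], so [e = 0],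
   and then [c = q] yields [z - q = q M - b] with [b = q], contradicting
   [a <> b]. *)

Lemma list_extremum {A : Type} (R : A -> A -> Prop)
    (R_total : forall x y, R x y \/ R y x)
    (R_trans : forall x y z, R x y -> R y z -> R x z) (l : list A) :
  l <> nil -> exists m, In m l /\ forall x, In x l -> R m x.
Proof.
  induction l as [|a l IH]; intros Hl; [congruence|].
  destruct l as [|b l].
  - exists a; split; [now left|].
    intros x [<-|[]]. now destruct (R_total a a).
  - destruct IH as [m [Hm Hmin]]; [discriminate|].
    destruct (R_total a m) as [Ham|Hma].
    + exists a; split; [now left|].
      intros x [<-|Hx].
      * now destruct (R_total a a).
      * exact (R_trans _ _ _ Ham (Hmin x Hx)).
    + exists m; split; [now right|].
      intros x [<-|Hx]; auto.
Qed.

Lemma finite_set_extremum (R : Z -> Z -> Prop)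
    (R_total : forall x y, R x y \/ R y x)
    (R_trans : forall x y z, R x y -> R y z -> R x z) (C : Z -> Prop) :
  finite_set C -> (exists c, C c) -> exists m, C m /\ forall x, C x -> R m x.
Proof.
  intros [l Hl] [c Hc].
  destruct (list_extremum R R_total R_trans l) as [m [Hm Hmin]].
  - intros ->. exact (proj1 (Hl c) Hc).
  - exists m. split; [now apply Hl|].
    intros x Hx. apply Hmin, Hl, Hx.
Qed.

Lemma mul_add_small_inj (M a a' e e' : Z) :
  Z.abs (e - e') < M -> a * M + e = a' * M + e' -> a = a' /\ e = e'.
Proof.
  intros He Heq.
  assert (Hdiff : (a - a') * M = e' - e) by lia.
  destruct (Z.eq_dec a a') as [->|Ha]; [lia|].
  assert (M <= Z.abs ((a - a') * M)) by (rewrite Z.abs_mul; nia).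
  lia.
Qed.

Definition distinct_diff_set (C : Z -> Prop) (M : Z) : Z -> Prop :=
  fun w => exists a b, C a /\ C b /\ a <> b /\ w = a * M - b.

Lemma distinct_diff_complement_minimal (C C' : Z -> Prop) (M : Z) :
  proper_subset C' C ->
  ~ additive_complement C' (fun w => ~ distinct_diff_set C M w).
Proof.
  intros [Hsub [c [Hc Hnc]]] Hcover.
  destruct (Hcover (c * M)) as [c' [w [Hc' [Hw Hsum]]]].
  apply Hw. exists c, c'.
  repeat split; auto; [congruence|lia].
Qed.

Section Covering.

Variables (C : Z -> Prop) (lo hi M : Z).
Hypotheses (lo_in : C lo) (hi_in : C hi).
Hypotheses (lo_le : forall x, C x -> lo <= x) (le_hi : forall x, C x -> x <= hi).
Hypothesis M_large : 2 * (hi - lo) < M.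

Lemma shifted_diff_repr_unique (z a b c a' b' c' : Z) :
  C b -> C c -> C b' -> C c' ->
  z - c = a * M - b -> z - c' = a' * M - b' ->
  a = a' /\ c - b = c' - b'.
Proof.
  intros Hb Hc Hb' Hc' Hz Hz'.
  apply mul_add_small_inj with M.
  - pose proof (lo_le b Hb); pose proof (le_hi b Hb).
    pose proof (lo_le c Hc); pose proof (le_hi c Hc).
    pose proof (lo_le b' Hb'); pose proof (le_hi b' Hb').
    pose proof (lo_le c' Hc'); pose proof (le_hi c' Hc').
    apply Z.abs_lt. lia.
  - lia.
Qed.

Lemma distinct_diff_complement_cover :
  additive_complement C (fun w => ~ distinct_diff_set C M w).
Proof.
  intros z. apply NNPP. intros Hz.
  assert (Hall : forall c, C c -> distinct_diff_set C M (z - c)).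
  { intros c Hc. apply NNPP. intros Hnot.
    apply Hz. exists c, (z - c). repeat split; auto; lia. }
  destruct (Hall lo lo_in) as [a1 [b1 [Ha1 [Hb1 [Hab1 E1]]]]].
  destruct (Hall hi hi_in) as [a2 [b2 [Ha2 [Hb2 [Hab2 E2]]]]].
  destruct (Hall a1 Ha1) as [a3 [b3 [Ha3 [Hb3 [Hab3 E3]]]]].
  destruct (shifted_diff_repr_unique z a1 b1 lo a2 b2 hi) as [_ Hlohi]; auto.
  destruct (shifted_diff_repr_unique z a1 b1 lo a3 b3 a1) as [Ha13 Hlo1]; auto.
  pose proof (lo_le b1 Hb1); pose proof (le_hi b2 Hb2).
  (* [lo - b1 <= 0 <= hi - b2] forces the common offset to vanish, so [b3 = a1 = a3] *)
  lia.
Qed.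

End Covering.

Theorem theorem9 (C : Z -> Prop) (hfin : finite_set C) (hne : exists c, C c) :
  exists W : Z -> Prop, minimal_additive_complement C W.
Proof.
  destruct (finite_set_extremum Z.le ltac:(lia) ltac:(lia) C hfin hne)
    as [lo [lo_in lo_le]].
  destruct (finite_set_extremum Z.ge ltac:(lia) ltac:(lia) C hfin hne)
    as [hi [hi_in hi_ge]].
  exists (fun w => ~ distinct_diff_set C (2 * (hi - lo) + 1) w).
  split.
  - apply (distinct_diff_complement_cover C lo hi); auto.
    + intros x Hx. apply Z.ge_le, hi_ge, Hx.
    + lia.
  - intros C' Hproper. now apply distinct_diff_complement_minimal.
Qed.
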